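(* Let $I$ be a non-empty finite set of positive integers, let $\lambda=\lambda^I$, let $s=\lambda_1-1$, and let $(C_0,C_1,\ldots,C_s)$ be the Naruse-Newton coefficients of $I$. If for some positive integer $i\le s$ it holds that $\lambda'_{i+1}=\lambda'_{s+1}=2$, then $$\frac{C_0}{0!}=\frac{C_1}{1!}=\cdots=\frac{C_{s-i+1}}{(s-i+1)!}.$$
   Context: Partitions are drawn as Young diagrams $\mathbb{D}(\lambda)$ in English notation; $c_{i,j}$ is the cell in row $i$ and column $j$; $\lambda'$ is the conjugate partition ($\lambda'_j$ is the number of cells in column $j$). The hook length $h_\lambda(c)$ of a cell $c$ is the number of cells of $\mathbb{D}(\lambda)$ weakly to the right of $c$ in its row or weakly below $c$ in its column (counting $c$ once). For partitions $\mu\subseteq\lambda$, an excited diagram of $\lambda/\mu$ is any subset of $\mathbb{D}(\lambda)$ obtained from $\mathbb{D}(\mu)$ by repeatedly applying the move: replace a cell $c_{i,j}\in D$ by $c_{i+1,j+1}$, allowed iff $c_{i+1,j+1}\in\mathbb{D}(\lambda)$ and none of $c_{i,j+1},c_{i+1,j},c_{i+1,j+1}$ lies in $D$; $\mathbb{E}(\lambda/\mu)$ denotes the set of excited diagrams. Ribbons and descent sets: a ribbon with $n$ cells is read from its lower-left cell to its upper-right cell, each successive cell being directly to the right of or directly above the previous one; it corresponds to the set of $i\in\{1,\ldots,n-1\}$ such that cell $i$ is directly below cell $i+1$ (this is the common descent set of all permutations read off from its standard fillings). For a non-empty finite set $I$ of positive integers, $\lambda^I$ is the unique partition with $\lambda^I_1=\lambda^I_2$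 such that the set of cells $c_{i,j}\in\mathbb{D}(\lambda^I)$ having fewer than three of $c_{i,j+1},c_{i+1,j},c_{i+1,j+1}$ in $\mathbb{D}(\lambda^I)$ is a ribbon (of $\max I+1$ cells) corresponding to $I$; this ribbon equals $\mathbb{D}(\lambda^I)\setminus\mathbb{D}(\mu^I)$ for a partition $\mu^I$. Put $s=s(I)=\lambda^I_1-1$. Naruse-Newton coefficients: every excited diagram $D$ of $\lambda^I/\mu^I$ meets the first row in a set $\{c_{1,1},\ldots,c_{1,r}\}$ with $0\le r\le s$. For $0\le j\le s$, $$C_j=C_j(I)=\sum_{D}\ \prod_{c\in D,\ c\text{ not in row }1} h_{\lambda^I}(c),$$ the sum over all $D\in\mathbb{E}(\lambda^I/\mu^I)$ having exactly $s-j$ cells in the first row. (These are the coefficients of the excitation factor of the ribbon in the Naruse-Newton basis.) Example: $I=\{1,3,5\}$ gives $\lambda^I=(3,3,2,1)$, $s=2$, $(C_0,C_1,C_2)=(6,6,3)$. *)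

From HB Require Import structures.
From mathcomp Require Import all_boot all_order all_algebra.
From mathcomp Require Import finmap.
From mathcomp Require Import boolp.

Set Implicit Arguments.
Unset Strict Implicit.
Unset Printing Implicit Defensive.

Local Open Scope fset_scope.

(* A partition is a weakly decreasing sequence of positive integers;
   lambda_i is [nth 0 la i.-1] (rows are 1-indexed). *)
Definition is_partition (la : seq nat) : bool :=
  sorted geq la && all (fun x => 0 < x) la.

(* A cell c_{i,j} is the pair (i, j), 1-indexed, English notation. *)
Definition in_diag (la : seq nat) (c : nat * nat) : bool :=
  [&& 0 < c.1, 0 < c.2 & c.2 <= nth 0 la c.1.-1].

Definition diagram (la : seq nat) : {fset nat * nat} :=
  [fset c in [seq (i, j) | i <- iota 1 (size la), j <- iota 1 (nth 0 la i.-1)]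
     | in_diag la c].

Definition conj_part (la : seq nat) (j : nat) : nat :=
  count (fun x => j <= x) la.

Definition hook (la : seq nat) (c : nat * nat) : nat :=
  ((nth 0 la c.1.-1 - c.2) + (conj_part la c.2 - c.1) + 1)%N.

Definition outer_cells (la : seq nat) : {fset nat * nat} :=
  [fset c in diagram la |
     (((c.1, c.2.+1) \in diagram la) + ((c.1.+1, c.2) \in diagram la)
       + ((c.1.+1, c.2.+1) \in diagram la) < 3)%N].

(* The ribbon with max I + 1 cells corresponding to I, placed in the plane
   with offsets (a, b): cell k (k = 1 .. max I + 1) sits in row
   a + #{m in I | k <= m} and column b + #{1 <= m < k | m \notin I}; thus
   cell k+1 is directly above cell k iff k \in I, and directly to its right
   otherwise.  Every placement of the ribbon is obtained for some a, b. *)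
Definition maxI (I : {fset nat}) : nat := \max_(m <- I) m.

Definition ribbon_cell (I : {fset nat}) (a b k : nat) : nat * nat :=
  ((a + #|` [fset m in I | k <= m]|)%N,
   (b + count (fun m => m \notin I) (iota 1 k.-1))%N).

Definition ribbon (I : {fset nat}) (a b : nat) : {fset nat * nat} :=
  [fset ribbon_cell I a b k | k in iota 1 (maxI I).+1].

Definition is_lambdaI (I : {fset nat}) (la : seq nat) : Prop :=
  [/\ is_partition la, nth 0 la 0 = nth 0 la 1
    & exists a b, outer_cells la = ribbon I a b].

Definition mu_cells (la : seq nat) : {fset nat * nat} :=
  diagram la `\` outer_cells la.

Definition excite_step (la : seq nat) (D D' : {fset nat * nat}) : Prop :=
  exists i j, [/\ (i, j) \in D, (i.+1, j.+1) \in diagram la,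
     [&& (i, j.+1) \notin D, (i.+1, j) \notin D & (i.+1, j.+1) \notin D]
     & D' = ((i.+1, j.+1) |` (D `\ (i, j)))%fset].

Inductive excited_from (la : seq nat) (D0 : {fset nat * nat}) :
  {fset nat * nat} -> Prop :=
| ex_refl : excited_from la D0 D0
| ex_step D D' : excited_from la D0 D -> excite_step la D D' ->
    excited_from la D0 D'.

Definition excited_diagrams (la : seq nat) (D0 : {fset nat * nat}) :
  {fset {fset nat * nat}} :=
  [fset D in fpowerset (diagram la) | `[< excited_from la D0 D >]].

Definition first_row_count (D : {fset nat * nat}) : nat :=
  #|` [fset c in D | c.1 == 1%N]|.

Definition s_of (la : seq nat) : nat := (nth 0 la 0).-1.

Definition NN_coeff (la : seq nat) (j : nat) : nat :=
  (\sum_(D <- excited_diagrams la (mu_cells la)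
          | first_row_count D == s_of la - j)
     \prod_(c <- D | c.1 != 1) hook la c)%N.

(* Write s + 1 = lambda_1 = lambda_2.  The hypothesis forces lambda_3 <= i and
   makes columns i+1, ..., s+1 of height exactly 2, so D(mu) is the row-1 cells
   (1,1), ..., (1,s) plus cells of rows >= 2 that, in row 2, lie left of
   column i.  In an excited diagram the row-1 cells can only move by sliding
   the last one down into row 2; after k slides the new cells
   (2, s-k+2), ..., (2, s+1) have hook lengths k, ..., 1.  While k <= s-i+1
   these cells stay right of column i, so the slides are independent of the
   moves of the other cells.  Hence D |-> (D with k slides) is a bijection from
   the excited diagrams with s cells in row 1 onto those with s - k cells in
   row 1 that multiplies the weight by k!, i.e. C_k = k! C_0. *)

From HB Require Import structures.
From mathcomp Require Import all_boot all_order all_algebra.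
From mathcomp Require Import finmap boolp zify.
Import GRing.Theory Num.Theory.

Set Implicit Arguments.
Unset Strict Implicit.
Unset Printing Implicit Defensive.

Local Open Scope fset_scope.

(* Row 1 of D(mu) after its last [m] cells have slid down into row 2. *)
Definition top_cells (s m : nat) : {fset nat * nat} :=
  [fset c in [seq (1, j) | j <- iota 1 (s - m)] ++
             [seq (2, j) | j <- iota (s - m).+2 m]].

(* Confines the cells of an excited diagram that descend from rows >= 2 of mu. *)
Definition is_low (i : nat) (L : {fset nat * nat}) : Prop :=
  forall c : nat * nat, c \in L -> 1 < c.1 /\ (c.1 = 2 -> c.2 < i).

Definition weight (la : seq nat) (D : {fset nat * nat}) : nat :=
  \prod_(c <- D | c.1 != 1) hook la c.

Lemma NN_coeffE la j : NN_coeff la j =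
  \sum_(D <- excited_diagrams la (mu_cells la) | first_row_count D == s_of la - j)
     weight la D.
Proof. by []. Qed.

Lemma mem_map_pair (r : nat) (l : seq nat) (c : nat * nat) :
  (c \in [seq (r, j) | j <- l]) = (c.1 == r) && (c.2 \in l).
Proof.
case: c => a b /=; apply/mapP/andP => [[j jl [-> ->]] | [/eqP -> bl]] //.
by exists b.
Qed.

Lemma mem_top_cells s m a b : ((a, b) \in top_cells s m) =
  (a == 1) && (0 < b <= s - m) || (a == 2) && ((s - m).+2 <= b < (s - m).+2 + m).
Proof. by rewrite !inE /= !mem_map_pair !mem_iota /= add1n. Qed.

Lemma notin_top_cells0 s c : 1 < c.1 -> c \notin top_cells s 0.
Proof. by case: c => a b /=; rewrite mem_top_cells; lia. Qed.

Lemma fsetU1UD1 (K : choiceType) (T L : {fset K}) x y : y \notin T ->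
  x |` ((T `|` L) `\ y) = T `|` (x |` (L `\ y)).
Proof.
move=> yT; apply/fsetP => z; rewrite !(in_fsetU, in_fset1, in_fsetD1).
case: (z =P y) => [-> | _] /=; first by rewrite (negbTE yT).
by case: (z \in T); case: (z \in L); case: (z == x).
Qed.

Section TopCells.
Variables (s i : nat) (L : {fset nat * nat}).
Hypothesis lowL : is_low i L.

Lemma low_notin_top m c :
  0 < i <= s -> m <= s - i + 1 -> c \in L -> c \notin top_cells s m.
Proof. by case: c => a b i_bd le_m /lowL /= low_ab; rewrite mem_top_cells; lia. Qed.

Lemma fsetUD_top m : 0 < i <= s -> m <= s - i + 1 ->
  (top_cells s m `|` L) `\` top_cells s m = L.
Proof.
move=> i_bd le_m; apply/fsetP => c; rewrite in_fsetD in_fsetU.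
case cL: (c \in L); last by rewrite orbF andNb.
by rewrite orbT andbT (low_notin_top i_bd le_m cL).
Qed.

Lemma first_row_count_top m : m <= s -> first_row_count (top_cells s m `|` L) = s - m.
Proof.
move=> le_ms; rewrite /first_row_count.
have -> : [fset c in top_cells s m `|` L | c.1 == 1] =
          [fset c in [seq (1, j) | j <- iota 1 (s - m)]].
  apply/fsetP => -[a b]; rewrite !inE /= !mem_map_pair !mem_iota /=.
  by case abL: ((a, b) \in L); [have /= := lowL abL | ]; lia.
rewrite card_fseq undup_id ?size_map ?size_iota //.
by rewrite map_inj_uniq ?iota_uniq // => x y [].
Qed.

Lemma top_cellsS m : m < s ->
  (2, (s - m).+1) |` ((top_cells s m `|` L) `\ (1, s - m)) = top_cells s m.+1 `|` L.
Proof.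
move=> lt_ms; apply/fsetP => -[a b].
rewrite !inE /= !mem_map_pair !mem_iota /= !xpair_eqE.
by case abL: ((a, b) \in L); [have /= := lowL abL | ]; lia.
Qed.

End TopCells.

Lemma mem_diagram la c : (c \in diagram la) = in_diag la c.
Proof.
rewrite !inE /= andb_idl //; case: c => a b /and3P [/= a_gt0 b_gt0 b_le].
apply/allpairsPdep; exists a, b; split => //; rewrite mem_iota add1n ltnS.
  rewrite a_gt0 /=; case: (leqP a (size la)) => // lt_size.
  by move: b_le; rewrite nth_default; lia.
by rewrite b_gt0.
Qed.

Lemma mem_mu_cells la c : (c \in mu_cells la) =
  [&& c \in diagram la, (c.1, c.2.+1) \in diagram la, (c.1.+1, c.2) \in diagram la
    & (c.1.+1, c.2.+1) \in diagram la].
Proof.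
rewrite /mu_cells /outer_cells; move: (diagram la) => Dg; rewrite !inE /=.
by case: (c \in Dg); case: (_ \in Dg); case: (_ \in Dg); case: (_ \in Dg).
Qed.

Lemma excited_sub_diagram la D : excited_from la (mu_cells la) D -> D `<=` diagram la.
Proof.
elim=> [|E E' _ subE [a [b [_ ab_diag _ ->]]]].
  by apply/fsubsetP => c; rewrite mem_mu_cells => /andP[].
apply/fsubsetP => c; rewrite in_fset1U in_fsetD1 => /orP[/eqP -> // | /andP[_ cE]].
exact: (fsubsetP subE).
Qed.

Lemma excited_diagramsP la D :
  reflect (excited_from la (mu_cells la) D) (D \in excited_diagrams la (mu_cells la)).
Proof.
have := @excited_sub_diagram la D; rewrite /excited_diagrams.
move: (diagram la) => Dg subD; rewrite !inE fpowersetE.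
by apply: (iffP andP) => [[_ /asboolP] | exD] //; split; [exact: subD | apply/asboolP].
Qed.

Lemma first_row_count_step la D D' : D `<=` diagram la -> excite_step la D D' ->
  first_row_count D' <= first_row_count D.
Proof.
move=> subD [a [b [abD ab_diag _ ->]]]; apply: fsubset_leq_card.
apply/fsubsetP => -[x y]; rewrite !inE /= => /andP[/orP[/eqP[-> ->] | /andP[_ ->]] //].
by move: (fsubsetP subD _ abD); rewrite mem_diagram /in_diag /=; lia.
Qed.

Lemma weight_slide_row1 la D b : (1, b) \in D -> (2, b.+1) \notin D ->
  weight la ((2, b.+1) |` (D `\ (1, b))) = hook la (2, b.+1) * weight la D.
Proof.
move=> bD nD; rewrite /weight !big_mkcond /=.
rewrite big_fsetU1 ?in_fsetD1 ?(negbTE nD) ?andbF //=.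
by rewrite [in RHS]big_mkcond [in RHS](big_fsetD1 (1, b)) //= mul1n.
Qed.

Definition slide_row (s k : nat) (D : {fset nat * nat}) : {fset nat * nat} :=
  top_cells s k `|` (D `\` top_cells s 0).

Section TwoLongRows.
Variables (la : seq nat) (s i : nat).
Hypotheses (la1 : nth 0 la 0 = s.+1) (la2 : nth 0 la 1 = s.+1) (la3 : nth 0 la 2 <= i).
Hypothesis i_bd : 0 < i <= s.
Hypothesis col_height2 : forall c, i < c <= s.+1 -> conj_part la c = 2.

Lemma mu_cells_top : exists2 L, is_low i L & mu_cells la = top_cells s 0 `|` L.
Proof.
exists (mu_cells la `\` top_cells s 0).
  move=> [a b]; rewrite in_fsetD mem_top_cells mem_mu_cells !mem_diagram /in_diag /=.
  by case: a => [|[|[|a]]] /=; rewrite ?la1 ?la2; lia.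
apply/fsetP => -[a b]; rewrite in_fsetU in_fsetD.
case: (boolP ((a, b) \in top_cells s 0)) => //=.
rewrite mem_top_cells mem_mu_cells !mem_diagram /in_diag /= => ab_top.
have -> : a = 1 by lia.
by rewrite /= la1 la2; lia.
Qed.

(* Row-2 cells of [top_cells s m] lie right of column [i], where the diagram
   has no row 3: only the last cell of row 1 can move. *)
Lemma top_cell_move m a b : m <= s - i + 1 -> (a, b) \in top_cells s m ->
  (a.+1, b.+1) \in diagram la -> (a, b.+1) \notin top_cells s m ->
  [/\ a = 1, b = s - m & m < s].
Proof.
move=> le_m; rewrite !mem_top_cells mem_diagram /in_diag /=.
by case: (a =P 2) => [-> /= | a_ne2]; [lia | split; lia].
Qed.

Lemma excite_step_top m L E : m <= s - i + 1 -> is_low i L ->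
  excite_step la (top_cells s m `|` L) E ->
  (m < s /\ E = top_cells s m.+1 `|` L) \/
  exists2 L', is_low i L' & E = top_cells s m `|` L' /\
              excite_step la (top_cells s 0 `|` L) (top_cells s 0 `|` L').
Proof.
move=> le_m lowL [a [b [abE ab_diag /and3P[n1 n2 n3] ->]]].
move: abE; rewrite in_fsetU => /orP[ab_top | abL].
  move: n1; rewrite in_fsetU negb_or => /andP[n1 _].
  have [-> -> lt_ms] := top_cell_move le_m ab_top ab_diag n1.
  by left; split; rewrite ?(top_cellsS lowL).
have [a_gt1 _] := lowL _ abL; rewrite /= in a_gt1.
right; exists ((a.+1, b.+1) |` (L `\ (a, b))).
  by move=> c; rewrite in_fset1U in_fsetD1 => /orP[/eqP -> /= | /andP[_ /lowL]] //; lia.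
split; first by rewrite fsetU1UD1 // (low_notin_top lowL i_bd le_m).
exists a, b; split=> //.
- by rewrite in_fsetU abL orbT.
- move: n1 n2 n3; rewrite !in_fsetU !negb_or => /andP[_ ->] /andP[_ ->] /andP[_ ->].
  by rewrite !notin_top_cells0 //= ltnW.
- by rewrite fsetU1UD1 // notin_top_cells0.
Qed.

Lemma excited_top_decomposition E : excited_from la (mu_cells la) E ->
  i.-1 <= first_row_count E ->
  exists m L, [/\ m <= s - i + 1, E = top_cells s m `|` L, is_low i L
                & excited_from la (mu_cells la) (top_cells s 0 `|` L)].
Proof.
elim=> [|D D' exD IH stepD] frcD'.
  have [L lowL muE] := mu_cells_top.
  by exists 0, L; rewrite -muE; split=> //; apply: ex_refl.
have frcD := leq_trans frcD' (first_row_count_step (excited_sub_diagram exD) stepD).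
have [m [L [le_m eD lowL exL]]] := IH frcD; subst D.
case: (excite_step_top le_m lowL stepD) => [[lt_ms eD'] | [L' lowL' [eD' stepL]]];
  subst D'.
  exists m.+1, L; split=> //.
  by move: frcD'; rewrite (first_row_count_top lowL lt_ms); lia.
by exists m, L'; split=> //; apply: ex_step exL stepL.
Qed.

Lemma excited_top_slide L k : is_low i L ->
  excited_from la (mu_cells la) (top_cells s 0 `|` L) -> k <= s - i + 1 ->
  excited_from la (mu_cells la) (top_cells s k `|` L).
Proof.
move=> lowL ex0; elim: k => // k IH lt_k.
have notinL c : c.1 < 2 \/ c.1 = 2 /\ i <= c.2 -> c \notin L.
  by move=> c_out; apply/negP => /lowL; lia.
apply: ex_step (IH (ltnW lt_k)) _; exists 1, (s - k); split.
- by rewrite in_fsetU mem_top_cells; apply/orP; left; lia.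
- by rewrite mem_diagram /in_diag /= la2; lia.
- rewrite !in_fsetU !negb_or !mem_top_cells !notinL /=; lia.
- by rewrite (top_cellsS lowL) //; lia.
Qed.

Lemma weight_top L k : is_low i L -> k <= s - i + 1 ->
  weight la (top_cells s k `|` L) = k`! * weight la (top_cells s 0 `|` L).
Proof.
move=> lowL; elim: k => [|k IH] le_k; first by rewrite mul1n.
rewrite -(top_cellsS lowL); last by lia.
rewrite weight_slide_row1; first last.
- rewrite in_fsetU negb_or mem_top_cells; apply/andP; split; first lia.
  by apply/negP => /lowL /=; lia.
- by rewrite in_fsetU mem_top_cells; apply/orP; left; lia.
rewrite IH ?factS ?mulnA; last by lia.
by congr (_ * _ * _); rewrite /hook /= la2 col_height2; lia.
Qed.

Lemma excited_first_rowP j D : j <= s - i + 1 ->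
  reflect (exists2 L, is_low i L &
             D = top_cells s j `|` L /\
             excited_from la (mu_cells la) (top_cells s 0 `|` L))
          ((first_row_count D == s - j) && (D \in excited_diagrams la (mu_cells la))).
Proof.
move=> le_j; apply: (iffP andP) => [[/eqP frcD /excited_diagramsP exD] |].
  have frcD_ge : i.-1 <= first_row_count D by rewrite frcD; lia.
  have [m [L [le_m eD lowL ex0]]] := excited_top_decomposition exD frcD_ge.
  have ejm : j = m by move: frcD; rewrite eD (first_row_count_top lowL) //; lia.
  by exists L => //; rewrite ejm.
move=> [L lowL [-> ex0]]; split; first by rewrite (first_row_count_top lowL) //; lia.
exact/excited_diagramsP/excited_top_slide.
Qed.

Lemma slide_rowE k L : is_low i L -> k <= s - i + 1 ->
  slide_row s k (top_cells s 0 `|` L) = top_cells s k `|` L.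
Proof. by move=> lowL le_k; rewrite /slide_row (fsetUD_top lowL). Qed.

Lemma excited_first_row_perm k : k <= s - i + 1 ->
  perm_eq [seq D <- excited_diagrams la (mu_cells la) | first_row_count D == s - k]
          [seq slide_row s k D | D <- excited_diagrams la (mu_cells la)
                                & first_row_count D == s - 0].
Proof.
move=> le_k; have X0P D := excited_first_rowP D (leq0n (s - i + 1)).
apply: uniq_perm; first by rewrite filter_uniq ?fset_uniq.
  rewrite map_inj_in_uniq ?filter_uniq ?fset_uniq // => F1 F2.
  rewrite !mem_filter => /X0P [L1 low1 [-> _]] /X0P [L2 low2 [-> _]].
  rewrite !slide_rowE // => /(congr1 (fsetD^~ (top_cells s k))).
  by rewrite !(fsetUD_top _ i_bd le_k) // => ->.
move=> D; rewrite mem_filter; apply/(excited_first_rowP _ le_k)/mapP.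
  move=> [L lowL [-> ex0]]; exists (top_cells s 0 `|` L); last by rewrite slide_rowE.
  by rewrite mem_filter; apply/X0P; exists L.
move=> [F]; rewrite mem_filter => /X0P [L lowL [-> ex0]] ->.
by exists L; rewrite ?slide_rowE.
Qed.

Lemma NN_coeff_top k : k <= s - i + 1 -> NN_coeff la k = k`! * NN_coeff la 0.
Proof.
move=> le_k; have s_la : s_of la = s by rewrite /s_of la1.
rewrite !NN_coeffE s_la -[LHS]big_filter -[in RHS]big_filter big_distrr.
rewrite (perm_big _ (excited_first_row_perm le_k)) big_map; apply: eq_big_seq => F.
rewrite mem_filter => /(excited_first_rowP _ (leq0n _)) [L lowL [-> _]].
by rewrite slide_rowE // weight_top.
Qed.

End TwoLongRows.

Lemma conj_part_two_rows la i : nth 0 la 0 = nth 0 la 1 -> i < nth 0 la 0 ->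
  conj_part la i.+1 = 2 ->
  nth 0 la 2 <= i /\ forall c, i < c <= nth 0 la 0 -> conj_part la c = 2.
Proof.
rewrite /conj_part; case: la => [|l1 [|l2 r]] //= <-; first lia.
move=> lt_i; rewrite lt_i /= => /eqP; rewrite !eqSS => /eqP count0.
split; first by case: r count0 => //= l3 r; lia.
move=> c /andP[lt_ic le_c]; rewrite le_c /=.
have : count (fun x => c <= x) r <= count (fun x => i.+1 <= x) r.
  by apply: sub_count => x /=; apply: leq_trans.
by rewrite count0; lia.
Qed.

Unset Implicit Arguments.
Local Close Scope fset_scope.

Theorem proposition4p3 (I : {fset nat}) (la : seq nat) :
  I != fset0 -> (0 \notin I) -> is_lambdaI I la ->
  forall i : nat, (0 < i <= s_of la)%N ->
  conj_part la i.+1 = 2%N -> conj_part la (s_of la).+1 = 2%N ->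
  forall k : nat, (k <= s_of la - i + 1)%N ->
    ((NN_coeff la k)%:R / (k`!)%:R : rat)%R
      = ((NN_coeff la 0)%:R / (0`!)%:R)%R.
Proof.
move=> _ _ [_ la12 _] i i_bd col_i _ k le_k.
have la1 : nth 0 la 0 = (s_of la).+1 by move: i_bd; rewrite /s_of; lia.
have la2 : nth 0 la 1 = (s_of la).+1 by rewrite -la12.
have lt_i : i < nth 0 la 0 by rewrite la1; lia.
have [la3 col_height2] := conj_part_two_rows la12 lt_i col_i.
rewrite la1 in col_height2.
rewrite (NN_coeff_top la1 la2 la3 i_bd col_height2 le_k) natrM fact0 divr1 mulrC mulKf //.
by rewrite pnatr_eq0 -lt0n fact_gt0.
Qed.
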